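(* Assume that $\Pr[\mathit{QH} > 1/\Delta] \leq \varepsilon$. Then the procedure $\mathbf{Detect}(U,\Delta,\varepsilon)$ accepts $\ket{\psi}$ with probability $\|\psi\|^2-\delta_0^2-\mathrm{O}(\varepsilon)$, and with probability $0$ if $|\delta_0|=\|\psi\|$. In addition, the number of applications of the controlled operator $\text{c-}U$ is $\mathrm{O}(\log(1/\varepsilon)/\Delta)$.
   Context: Let $U$ be a unitary matrix with real entries. Its eigenvalues are $1$, $-1$, and pairs of conjugate complex numbers $(e^{i\alpha_j},e^{-i\alpha_j})$ with $0<\alpha_j<\pi$, $1\le j\le J$. Let $\ket{\psi}$ be a vector with real entries and norm at most one; it decomposes uniquely as $\ket{\psi}=\delta_0\ket{w_0}+\sum_{1\le j\le J}\delta_j(\ket{w_j^+}+\ket{w_j^-})+\delta_{-1}\ket{w_{-1}}$, where $\delta_0,\delta_{-1},\delta_j$ are reals, $\ket{w_0}$ is a unit eigenvector of $U$ with eigenvalue $1$, $\ket{w_{-1}}$ a unit eigenvector with eigenvalue $-1$, and $\ket{w_j^\pm}$ unit eigenvectors with eigenvalues $e^{\pm i\alpha_j}$, $\ket{w_j^-}=\overline{\ket{w_j^+}}$. Let $\mathit{QH}$ be the random variable taking value $1/\alpha_j$ with probability $2\delta_j^2$, value $1/\pi$ with probability $\delta_{-1}^2$, and $0$ otherwise (probabilities sum to $\|\psi\|^2$). Let $\mathbf{Estimate}$ be the phase estimation circuit (Kitaev; Cleve et al.) which, given an eigenvector of $U$ with eigenvalue $e^{i\alpha}$, determines $\alpha\in(-\pi,\pi]$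 with precision $\Delta$ and error probability at most $1/3$, determines $\alpha=0$ with probability $1$ on a $1$-eigenvector, and uses $\mathrm{O}(1/\Delta)$ calls to $\text{c-}U$ and its inverse. The procedure $\mathbf{Detect}(U,\Delta,\varepsilon)$ on input $\ket{\psi}$: apply $\Theta(\log(1/\varepsilon))$ times $\mathbf{Estimate}$ for $U$ with precision $\Delta$ to the same state $\ket{\psi}$; if at least one estimated phase is nonzero, accept, otherwise reject. *)

From mathcomp Require Import all_boot all_order all_algebra complex.
From mathcomp Require Import reals exp trigo.
Set Implicit Arguments. Unset Strict Implicit. Unset Printing Implicit Defensive.
Import Order.TTheory GRing.Theory Num.Theory.
Local Open Scope ring_scope.
Local Open Scope complex_scope.

Section Defs.
Variable R : realType.

Definition expi (a : R) : R[i] := cos a +i* sin a.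

Definition sqnorm n (v : 'cV[R[i]]_n) : R :=
  \sum_(i < n) (complex.Re (v i 0) ^+ 2 + complex.Im (v i 0) ^+ 2).

Definition conjv m n (A : 'M[R[i]]_(m, n)) : 'M[R[i]]_(m, n) := map_mx Num.conj A.
Definition adjoint m n (A : 'M[R[i]]_(m, n)) : 'M[R[i]]_(n, m) := (conjv A)^T.

Definition real_mx m n (A : 'M[R[i]]_(m, n)) : Prop := forall i j, complex.Im (A i j) = 0.

Definition cdist (a b : R) : R := Num.min `|a - b| (2 * pi - `|a - b|).

(* Pr[QH > 1/Delta] for the random variable QH of the paper:
   QH = 1/alpha_j w.p. 2 delta_j^2, 1/pi w.p. delta_{-1}^2, 0 otherwise. *)
Definition QH_tail J (alpha delta : 'I_J -> R) (deltam Delta : R) : R :=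
  \sum_(j < J | 1 / alpha j > 1 / Delta) 2 * delta j ^+ 2
  + (if 1 / pi > 1 / Delta then deltam ^+ 2 else 0).

(* An execution of Estimate followed by measurement of its output register is
   described by Kraus (branch) operators A k : 'M_n acting on the system register,
   each labelled with the estimated phase est k.  Running Estimate k times on
   fresh registers and measuring all outputs, the outcome sequence s occurs with
   probability ||A (s (k-1)) ... A (s 0) psi||^2. *)
Definition kraus_seq n K k (A : 'I_K -> 'M[R[i]]_n) (s : {ffun 'I_k -> 'I_K})
  : 'M[R[i]]_n := \prod_(t < k) A (s (rev_ord t)).

(* Probability that Detect (k repetitions of Estimate) accepts psi:
   at least one estimated phase is nonzero. *)
Definition detect_accept_prob n K k (A : 'I_K -> 'M[R[i]]_n) (est : 'I_K -> R)
  (psi : 'cV[R[i]]_n) : R :=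
  \sum_(s : {ffun 'I_k -> 'I_K} | [exists t, est (s t) != 0])
     sqnorm (kraus_seq A s *m psi).

End Defs.

From mathcomp Require Import all_boot all_order all_algebra complex.
From mathcomp Require Import reals exp trigo.
From mathcomp Require Import ring lra.
Import Order.TTheory GRing.Theory Num.Theory.
Set Implicit Arguments. Unset Strict Implicit. Unset Printing Implicit Defensive.
Local Open Scope ring_scope.
Local Open Scope complex_scope.

(* Estimate commutes with U, so the probability that k runs of it all return 0 (i.e. that
   Detect rejects) is additive over the eigencomponents of psi.  On the 1-eigencomponent
   every estimate is 0.  On a component of phase a with |a| >= Delta the estimate 0 is an
   error, so all k runs return it with probability at most 3^-k <= eps.  What remains are
   the components with 0 < |a| < Delta, whose total weight is Pr[QH > 1/Delta] <= eps. *)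

Section InnerProduct.
Variable R : realType.

Definition dotv n (u v : 'cV[R[i]]_n) : R[i] := \sum_i Num.conj (u i 0) * v i 0.

Lemma conj_mul_self (z : R[i]) :
  Num.conj z * z = ((complex.Re z) ^+ 2 + (complex.Im z) ^+ 2)%:C.
Proof.
case: z => a b; simpc; congr (_ +i* _); rewrite /= ?expr2 //.
by rewrite mulrC subrr.
Qed.

Lemma sqnorm_dotv n (v : 'cV[R[i]]_n) : (sqnorm v)%:C = dotv v v.
Proof. by rewrite /sqnorm rmorph_sum; apply: eq_bigr => i _; rewrite conj_mul_self. Qed.

Lemma sqnorm_ge0 n (v : 'cV[R[i]]_n) : 0 <= sqnorm v.
Proof. by apply: sumr_ge0 => i _; rewrite addr_ge0 ?sqr_ge0. Qed.

Lemma dotvE n (u v : 'cV[R[i]]_n) : dotv u v = (adjoint u *m v) 0 0.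
Proof. by rewrite !mxE; apply: eq_bigr => i _; rewrite !mxE. Qed.

Lemma adjoint_mul m p q (M : 'M[R[i]]_(m, p)) (N : 'M[R[i]]_(p, q)) :
  adjoint (M *m N) = adjoint N *m adjoint M.
Proof. by rewrite /adjoint /conjv map_mxM trmx_mul. Qed.

Lemma dotv_unitary n (U : 'M[R[i]]_n) (u v : 'cV[R[i]]_n) :
  adjoint U *m U = 1%:M -> dotv (U *m u) (U *m v) = dotv u v.
Proof. by move=> HU; rewrite !dotvE adjoint_mul -mulmxA (mulmxA (adjoint U)) HU mul1mx. Qed.

Lemma dotvZl n c (u v : 'cV[R[i]]_n) : dotv (c *: u) v = Num.conj c * dotv u v.
Proof. by rewrite /dotv mulr_sumr; apply: eq_bigr => i _; rewrite mxE rmorphM mulrA. Qed.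

Lemma dotvZr n c (u v : 'cV[R[i]]_n) : dotv u (c *: v) = c * dotv u v.
Proof. by rewrite /dotv mulr_sumr; apply: eq_bigr => i _; rewrite mxE mulrCA. Qed.

Lemma dotv_suml n (I : finType) (F : I -> 'cV[R[i]]_n) v :
  dotv (\sum_i F i) v = \sum_i dotv (F i) v.
Proof.
rewrite /dotv exchange_big /=; apply: eq_bigr => j _.
by rewrite summxE rmorph_sum mulr_suml.
Qed.

Lemma dotv_sumr n (I : finType) (F : I -> 'cV[R[i]]_n) u :
  dotv u (\sum_i F i) = \sum_i dotv u (F i).
Proof.
rewrite /dotv exchange_big /=; apply: eq_bigr => j _.
by rewrite summxE mulr_sumr.
Qed.

Lemma sqnorm_sum_orthogonal n (I : finType) (F : I -> 'cV[R[i]]_n) :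
  (forall i j, i != j -> dotv (F i) (F j) = 0) ->
  sqnorm (\sum_i F i) = \sum_i sqnorm (F i).
Proof.
move=> Forth; apply: complexI; rewrite sqnorm_dotv rmorph_sum dotv_suml.
apply: eq_bigr => i _; rewrite dotv_sumr (bigD1 i) //= big1 ?addr0 ?sqnorm_dotv //.
by move=> j ji; rewrite Forth // eq_sym.
Qed.

Lemma sqnormZ n (r : R) (v : 'cV[R[i]]_n) : sqnorm (r%:C *: v) = r ^+ 2 * sqnorm v.
Proof.
rewrite /sqnorm mulr_sumr; apply: eq_bigr => i _; rewrite mxE.
by case: (v i 0) => a b /=; rewrite !mul0r !subr0 !addr0 !exprMn mulrDr.
Qed.

Lemma sqnorm_conjv n (v : 'cV[R[i]]_n) : sqnorm (conjv v) = sqnorm v.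
Proof. by apply: eq_bigr => i _; rewrite mxE; case: (v i 0) => a b /=; rewrite sqrrN. Qed.

Lemma conjv_mul m p q (M : 'M[R[i]]_(m, p)) (N : 'M[R[i]]_(p, q)) :
  conjv (M *m N) = conjv M *m conjv N.
Proof. by rewrite /conjv map_mxM. Qed.

Lemma conjvZ m p c (M : 'M[R[i]]_(m, p)) : conjv (c *: M) = Num.conj c *: conjv M.
Proof. by apply/matrixP => i j; rewrite !mxE rmorphM. Qed.

Lemma real_mx_conjv m p (M : 'M[R[i]]_(m, p)) : real_mx M -> conjv M = M.
Proof.
move=> HM; apply/matrixP => i j; rewrite !mxE; move: (HM i j).
by case: (M i j) => a b /= ->; apply/eqP; rewrite eq_complex /= oppr0 !eqxx.
Qed.

End InnerProduct.

Section Phases.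
Variable R : realType.

Lemma conj_expi (a : R) : Num.conj (expi a) = expi (- a).
Proof. by rewrite /expi cosN sinN. Qed.

Lemma conj_expi_mul (a : R) : Num.conj (expi a) * expi a = 1.
Proof. by rewrite conj_mul_self /= cos2Dsin2. Qed.

Lemma expi0 : expi 0 = 1 :> R[i].
Proof. by rewrite /expi cos0 sin0. Qed.

Lemma expipi : expi pi = -1 :> R[i].
Proof. by rewrite /expi cospi sinpi; apply/eqP; rewrite eq_complex /= oppr0 !eqxx. Qed.

(* The sign of the sine separates (-pi, 0) from [0, pi]; on each, the cosine is injective. *)
Lemma expi_inj (a b : R) :
  - pi < a <= pi -> - pi < b <= pi -> expi a = expi b -> a = b.
Proof.
move=> /andP[Ha1 Ha2] /andP[Hb1 Hb2] [Hc Hs].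
have cos_inj0 (x y : R) : 0 <= x <= pi -> 0 <= y <= pi -> cos x = cos y -> x = y.
  by move=> Hx Hy; apply: cos_inj; rewrite in_itv.
have sin_lt0 (x : R) : - pi < x < 0 -> sin x < 0.
  move=> /andP[H1 H2]; rewrite -oppr_gt0 -sinN sin_gt0_pi //.
  by rewrite oppr_gt0 H2 /= ltrNl.
have sin_ge0 (x : R) : 0 <= x <= pi -> 0 <= sin x by move=> H; apply: sin_ge0_pi.
case: (leP 0 a) => Ha; case: (leP 0 b) => Hb.
- by apply: cos_inj0; rewrite ?Ha ?Ha2 ?Hb ?Hb2.
- have := sin_lt0 b; rewrite Hb Hb1 -Hs => /(_ isT).
  by have := sin_ge0 a; rewrite Ha Ha2 => /(_ isT) /le_lt_trans H /H; rewrite ltxx.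
- have := sin_lt0 a; rewrite Ha Ha1 Hs => /(_ isT).
  by have := sin_ge0 b; rewrite Hb Hb2 => /(_ isT) /le_lt_trans H /H; rewrite ltxx.
- apply/eqP; rewrite -eqr_opp; apply/eqP; apply: cos_inj0; last by rewrite !cosN.
  + by rewrite oppr_ge0 ltW //= lerNl ltW.
  + by rewrite oppr_ge0 ltW //= lerNl ltW.
Qed.

Lemma cdist0r (a : R) : `|a| <= pi -> cdist 0 a = `|a|.
Proof. by move=> H; rewrite /cdist sub0r normrN min_l //; lra. Qed.

End Phases.

Section UnitaryEigenvectors.
Variables (R : realType) (n : nat) (U : 'M[R[i]]_n).
Hypothesis U_unitary : adjoint U *m U = 1%:M.

Lemma eigenvector_orthogonal (u v : 'cV[R[i]]_n) (l m : R[i]) :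
  U *m u = l *: u -> U *m v = m *: v ->
  Num.conj l * l = 1 -> l != m -> dotv u v = 0.
Proof.
move=> Hu Hv Hl Hlm.
have E : dotv u v = Num.conj l * m * dotv u v.
  by rewrite -{1}(dotv_unitary u v U_unitary) Hu Hv dotvZl dotvZr mulrA.
have : (1 - Num.conj l * m) * dotv u v = 0 by rewrite mulrBl mul1r -E subrr.
move/eqP; rewrite mulf_eq0 => /orP[]; last by move/eqP.
rewrite subr_eq0 => /eqP H1; exfalso; move/eqP: Hlm; apply.
by rewrite -[l]mulr1 H1 mulrA (mulrC l) Hl mul1r.
Qed.

Lemma sqnorm_mul_eigen_sum (I : finType) (F : I -> 'cV[R[i]]_n) (ang : I -> R)
    (M : 'M[R[i]]_n) :
  M *m U = U *m M ->
  (forall i, - pi < ang i <= pi) -> injective ang ->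
  (forall i, U *m F i = expi (ang i) *: F i) ->
  sqnorm (M *m \sum_i F i) = \sum_i sqnorm (M *m F i).
Proof.
move=> HM ang_range ang_inj HF; rewrite mulmx_sumr; apply: sqnorm_sum_orthogonal.
move=> i j ij; apply: (eigenvector_orthogonal (l := expi (ang i)) (m := expi (ang j))).
- by rewrite mulmxA -HM -mulmxA HF scalemxAr.
- by rewrite mulmxA -HM -mulmxA HF scalemxAr.
- exact: conj_expi_mul.
- apply/eqP => /(expi_inj (ang_range i) (ang_range j)) /ang_inj /eqP.
  exact/negP.
Qed.

End UnitaryEigenvectors.

Definition ffun_cons (T : Type) k (x : T) (s : {ffun 'I_k -> T}) : {ffun 'I_k.+1 -> T} :=
  [ffun i => if unlift ord0 i is Some j then s j else x].
Arguments ffun_cons {T k}.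

Lemma ffun_cons0 T k x (s : {ffun 'I_k -> T}) : ffun_cons x s ord0 = x.
Proof. by rewrite ffunE unlift_none. Qed.

Lemma ffun_consS T k x (s : {ffun 'I_k -> T}) j : ffun_cons x s (lift ord0 j) = s j.
Proof. by rewrite ffunE liftK. Qed.

Lemma big_ffun_cons (V : zmodType) (T : finType) k (F : {ffun 'I_k.+1 -> T} -> V) :
  \sum_s F s = \sum_(x : T) \sum_(s : {ffun 'I_k -> T}) F (ffun_cons x s).
Proof.
rewrite pair_big /= (reindex (fun p : T * {ffun 'I_k -> T} => ffun_cons p.1 p.2)) //=.
exists (fun s : {ffun 'I_k.+1 -> T} => (s ord0, [ffun j => s (lift ord0 j)])).
  move=> [x s] _ /=; rewrite ffun_cons0; congr (_, _); apply/ffunP => j.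
  by rewrite ffunE ffun_consS.
move=> s _; apply/ffunP => i; rewrite ffunE /=.
by case: unliftP => [j|] ->; rewrite ?ffunE.
Qed.

Lemma ler_sum_subpred (R : numDomainType) (I : finType) (P Q : pred I) (F : I -> R) :
  (forall i, 0 <= F i) -> (forall i, P i -> Q i) ->
  \sum_(i | P i) F i <= \sum_(i | Q i) F i.
Proof.
move=> F_ge0 PQ; rewrite [X in X <= _]big_mkcond [X in _ <= X]big_mkcond.
apply: ler_sum => i _; case: (boolP (P i)) => Pi; first by rewrite (PQ _ Pi).
by case: (Q i).
Qed.

Lemma inv3_expr_le (R : realType) (eps : R) (k : nat) :
  0 < eps -> ln (1 / eps) / ln 3 <= k%:R -> (1 / 3) ^+ k <= eps.
Proof.
move=> eps_gt0 Hk.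
have ln3_gt0 : 0 < ln (3 : R) by apply: ln_gt0; rewrite ltr1n.
rewrite ler_pdivrMr // mulr_natl -lnXn // in Hk.
rewrite ler_ln ?posrE ?exprn_gt0 ?divr_gt0 // in Hk.
rewrite expr_div_n expr1n div1r -[eps]invrK -[X in _ <= X^-1]div1r.
by rewrite lef_pV2 ?posrE ?exprn_gt0 ?divr_gt0.
Qed.

Section Detect.
Variables (R : realType) (n K : nat) (U : 'M[R[i]]_n) (A : 'I_K -> 'M[R[i]]_n)
  (est : 'I_K -> R).
Hypothesis U_unitary : adjoint U *m U = 1%:M.
Hypothesis A_complete : \sum_(x < K) adjoint (A x) *m A x = 1%:M.
Hypothesis A_commute : forall x, A x *m U = U *m A x.

Definition reject_prob k (v : 'cV[R[i]]_n) : R :=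
  \sum_(s : {ffun 'I_k -> 'I_K} | [forall t, est (s t) == 0])
     sqnorm (kraus_seq A s *m v).

Lemma kraus_seq_cons k x (s : {ffun 'I_k -> 'I_K}) :
  kraus_seq A (ffun_cons x s) = kraus_seq A s *m A x.
Proof.
rewrite /kraus_seq big_ord_recr /= mulmxE.
have -> : rev_ord (@ord_max k) = ord0 by apply: val_inj => /=; rewrite subnn.
rewrite ffun_cons0; congr (_ * _); apply: eq_bigr => t _.
have -> : rev_ord (widen_ord (leqnSn k) t) = lift ord0 (rev_ord t).
  by apply: val_inj => /=; rewrite /bump /= add1n subSS subnSK.
by rewrite ffun_consS.
Qed.

Lemma kraus_seq_commute k (s : {ffun 'I_k -> 'I_K}) :
  kraus_seq A s *m U = U *m kraus_seq A s.
Proof.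
apply: (big_ind (fun M : 'M_n => M *m U = U *m M)) => [|M N HM HN|t _].
- by rewrite mul1mx mulmx1.
- by rewrite -mulmxE -mulmxA HN mulmxA HM mulmxA.
- exact: A_commute.
Qed.

Lemma sum_sqnorm_kraus (v : 'cV[R[i]]_n) : \sum_x sqnorm (A x *m v) = sqnorm v.
Proof.
suff: (\sum_x sqnorm (A x *m v))%:C = (sqnorm v)%:C :> R[i] by move/complexI.
rewrite rmorph_sum /= sqnorm_dotv dotvE.
under eq_bigr => x _ do
  rewrite sqnorm_dotv dotvE adjoint_mul -mulmxA (mulmxA (adjoint (A x))).
by rewrite -summxE -mulmx_sumr -mulmx_suml A_complete mul1mx.
Qed.

Lemma sum_sqnorm_kraus_seq k (v : 'cV[R[i]]_n) :
  \sum_(s : {ffun 'I_k -> 'I_K}) sqnorm (kraus_seq A s *m v) = sqnorm v.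
Proof.
elim: k v => [|k IHk] v.
  under eq_bigr => s _ do rewrite /kraus_seq big_ord0 mul1mx.
  by rewrite sumr_const card_ffun (card_ord 0) expn0.
rewrite big_ffun_cons -(sum_sqnorm_kraus v); apply: eq_bigr => x _.
rewrite -(IHk (A x *m v)); apply: eq_bigr => s _.
by rewrite kraus_seq_cons mulmxA.
Qed.

Lemma detect_accept_probE k (v : 'cV[R[i]]_n) :
  detect_accept_prob k A est v = sqnorm v - reject_prob k v.
Proof.
rewrite -(sum_sqnorm_kraus_seq k v) /reject_prob /detect_accept_prob.
rewrite [in RHS](bigID (fun s : {ffun 'I_k -> 'I_K} => [exists t, est (s t) != 0])) /=.
rewrite [X in _ = _ - X](eq_bigl (fun s : {ffun 'I_k -> 'I_K} =>
  ~~ [exists t, est (s t) != 0])) ?addrK // => s.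
by rewrite negb_exists; apply: eq_forallb => t; rewrite negbK.
Qed.

Lemma reject_prob_ge0 k v : 0 <= reject_prob k v.
Proof. by apply: sumr_ge0 => s _; apply: sqnorm_ge0. Qed.

Lemma reject_prob_le k v : reject_prob k v <= sqnorm v.
Proof.
rewrite -(sum_sqnorm_kraus_seq k v).
by apply: ler_sum_subpred => // s; apply: sqnorm_ge0.
Qed.

Lemma reject_probS k v :
  reject_prob k.+1 v = \sum_(x | est x == 0) reject_prob k (A x *m v).
Proof.
have all_est0_cons x (s : {ffun 'I_k -> 'I_K}) :
    [forall t, est (ffun_cons x s t) == 0] = (est x == 0) && [forall t, est (s t) == 0].
  apply/forallP/andP => [H|[Hx /forallP Hs] t].
    split; first by have := H ord0; rewrite ffun_cons0.
    by apply/forallP => t; have := H (lift ord0 t); rewrite ffun_consS.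
  by rewrite ffunE; case: unliftP.
rewrite /reject_prob big_mkcond [RHS]big_mkcond big_ffun_cons; apply: eq_bigr => x _.
case: (boolP (est x == 0)) => Hx; last first.
  by apply: big1 => s _; rewrite all_est0_cons (negbTE Hx).
rewrite [RHS]big_mkcond; apply: eq_bigr => s _.
by rewrite all_est0_cons Hx /= kraus_seq_cons mulmxA.
Qed.

Lemma reject_prob_eigen_sum k (I : finType) (F : I -> 'cV[R[i]]_n) (ang : I -> R) :
  (forall i, - pi < ang i <= pi) -> injective ang ->
  (forall i, U *m F i = expi (ang i) *: F i) ->
  reject_prob k (\sum_i F i) = \sum_i reject_prob k (F i).
Proof.
move=> ang_range ang_inj HF; rewrite /reject_prob [RHS]exchange_big /=.
apply: eq_bigr => s _.
exact: (sqnorm_mul_eigen_sum U_unitary (kraus_seq_commute s) ang_range ang_inj HF).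
Qed.

Hypothesis est_fixed : forall v : 'cV[R[i]]_n, U *m v = v ->
  \sum_(x < K | est x != 0) sqnorm (A x *m v) = 0.

Lemma reject_prob_fixed k v : U *m v = v -> reject_prob k v = sqnorm v.
Proof.
elim: k v => [|k IHk] v Hv.
  rewrite -(sum_sqnorm_kraus_seq 0 v); apply: eq_bigl => s.
  by apply/forallP => -[].
rewrite reject_probS (eq_bigr (fun x => sqnorm (A x *m v))); last first.
  by move=> x _; apply: IHk; rewrite mulmxA -A_commute -mulmxA Hv.
rewrite -(sum_sqnorm_kraus v) [in RHS](bigID (fun x => est x != 0)) /= est_fixed //.
by rewrite add0r; apply: eq_bigl => x; rewrite negbK.
Qed.

Variable Delta : R.
Hypothesis est_precise : forall (v : 'cV[R[i]]_n) (a : R), - pi < a <= pi ->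
  U *m v = expi a *: v -> sqnorm v = 1 ->
  \sum_(x < K | cdist (est x) a >= Delta) sqnorm (A x *m v) <= 1 / 3.

(* Outcome 0 is at cyclic distance |a| >= Delta from a, hence counted as an error of
   Estimate; the bound for unit vectors scales to all eigenvectors. *)
Lemma sum_sqnorm_est0_far v a :
  - pi < a <= pi -> U *m v = expi a *: v -> Delta <= `|a| ->
  \sum_(x | est x == 0) sqnorm (A x *m v) <= 1 / 3 * sqnorm v.
Proof.
move=> a_range Hv a_far.
have Delta_cdist : Delta <= cdist 0 a.
  by case/andP: a_range => ? ?; rewrite cdist0r // ler_norml ltW.
have [v0|v_gt0] := eqVneq (sqnorm v) 0.
  apply: (@le_trans _ _ (\sum_x sqnorm (A x *m v))).
    by apply: ler_sum_subpred => // x; apply: sqnorm_ge0.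
  by rewrite sum_sqnorm_kraus v0 mulr0.
have {}v_gt0 : 0 < sqnorm v by rewrite lt_def v_gt0 sqnorm_ge0.
pose c := (Num.sqrt (sqnorm v))^-1.
have c2v : c ^+ 2 * sqnorm v = 1.
  by rewrite /c exprVn sqr_sqrtr ?mulVf ?gt_eqF // ltW.
have := @est_precise (c%:C *: v) a a_range.
rewrite -scalemxAr Hv !scalerA mulrC sqnormZ c2v => /(_ erefl erefl).
under eq_bigr => x _ do rewrite -scalemxAr sqnormZ.
rewrite -mulr_sumr => est_error.
have est0_scaled : c ^+ 2 * \sum_(x | est x == 0) sqnorm (A x *m v) <= 1 / 3.
  apply: le_trans est_error; rewrite ler_wpM2l ?sqr_ge0 //.
  by apply: ler_sum_subpred => [x|x /eqP ->] //; apply: sqnorm_ge0.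
rewrite -[X in X <= _]mul1r -{1}c2v mulrAC.
by rewrite ler_wpM2r ?sqnorm_ge0.
Qed.

Lemma reject_prob_far k v a :
  - pi < a <= pi -> U *m v = expi a *: v -> Delta <= `|a| ->
  reject_prob k v <= (1 / 3) ^+ k * sqnorm v.
Proof.
move=> a_range; elim: k v => [|k IHk] v Hv a_far.
  by rewrite expr0 mul1r reject_prob_le.
rewrite reject_probS.
apply: (@le_trans _ _ (\sum_(x | est x == 0) (1/3) ^+ k * sqnorm (A x *m v))).
  apply: ler_sum => x _; apply: IHk => //.
  by rewrite mulmxA -A_commute -mulmxA Hv scalemxAr.
rewrite -mulr_sumr exprSr -mulrA ler_wpM2l ?exprn_ge0 ?divr_ge0 //.
exact: (sum_sqnorm_est0_far a_range Hv a_far).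
Qed.

Variables (I : finType) (F : I -> 'cV[R[i]]_n) (ang : I -> R).
Hypothesis ang_range : forall i, - pi < ang i <= pi.
Hypothesis ang_inj : injective ang.
Hypothesis F_eigen : forall i, U *m F i = expi (ang i) *: F i.

Lemma sqnorm_eigen_sum : sqnorm (\sum_i F i) = \sum_i sqnorm (F i).
Proof.
rewrite -[\sum_i F i]mul1mx (sqnorm_mul_eigen_sum U_unitary _ ang_range ang_inj F_eigen).
  by under eq_bigr do rewrite mul1mx.
by rewrite mul1mx mulmx1.
Qed.

Lemma reject_prob_eigen_split k :
  reject_prob k (\sum_i F i) =
  \sum_(i | ang i == 0) sqnorm (F i) + \sum_(i | ang i != 0) reject_prob k (F i).
Proof.
rewrite (reject_prob_eigen_sum k ang_range ang_inj F_eigen) (bigID (fun i => ang i == 0)) /=.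
congr (_ + _); apply: eq_bigr => i /eqP ang0.
by apply: reject_prob_fixed; rewrite F_eigen ang0 expi0 scale1r.
Qed.

Lemma detect_accept_prob_eigen_le k :
  detect_accept_prob k A est (\sum_i F i) <=
  sqnorm (\sum_i F i) - \sum_(i | ang i == 0) sqnorm (F i).
Proof.
rewrite detect_accept_probE reject_prob_eigen_split lerB // lerDl.
by apply: sumr_ge0 => i _; apply: reject_prob_ge0.
Qed.

Lemma detect_accept_prob_eigen_ge k :
  sqnorm (\sum_i F i) - \sum_(i | ang i == 0) sqnorm (F i)
    - detect_accept_prob k A est (\sum_i F i)
  <= \sum_(i | 0 < `|ang i| < Delta) sqnorm (F i) + (1 / 3) ^+ k * sqnorm (\sum_i F i).
Proof.
rewrite detect_accept_probE reject_prob_eigen_split.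
set Sr := \sum_(i | ang i != 0) _.
rewrite [X in X <= _](_ : _ = Sr); last by ring.
have reject_le i : ang i != 0 ->
    reject_prob k (F i) <=
    (if 0 < `|ang i| < Delta then sqnorm (F i) else 0) + (1 / 3) ^+ k * sqnorm (F i).
  rewrite -normr_gt0 => ang_gt0; rewrite ang_gt0 /=; case: ltP => ang_Delta.
    apply: le_trans (reject_prob_le k (F i)) _.
    by rewrite lerDl mulr_ge0 ?exprn_ge0 ?divr_ge0 ?sqnorm_ge0.
  by rewrite add0r (reject_prob_far _ (ang_range i) (F_eigen i)).
apply: le_trans (ler_sum _ reject_le) _; rewrite big_split /= lerD //.
  rewrite -big_mkcondr /=; apply: ler_sum_subpred => [i|i /andP[] //].
  exact: sqnorm_ge0.
rewrite -mulr_sumr ler_wpM2l ?exprn_ge0 ?divr_ge0 // sqnorm_eigen_sum.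
by apply: ler_sum_subpred => // i; apply: sqnorm_ge0.
Qed.

End Detect.

Section SpectralDecomposition.
Variables (R : realType) (n : nat) (U : 'M[R[i]]_n) (J : nat) (alpha delta : 'I_J -> R)
  (wp : 'I_J -> 'cV[R[i]]_n) (delta0 deltam : R) (w0 wm : 'cV[R[i]]_n).
Hypothesis U_real : real_mx U.
Hypothesis alpha_range : forall j, 0 < alpha j < pi.
Hypothesis alpha_inj : injective alpha.
Hypothesis wp_eigen : forall j, U *m wp j = expi (alpha j) *: wp j /\ sqnorm (wp j) = 1.
Hypothesis w0_eigen : delta0 = 0 \/ (U *m w0 = w0 /\ sqnorm w0 = 1).
Hypothesis wm_eigen : deltam = 0 \/ (U *m wm = - wm /\ sqnorm wm = 1).

(* [inl true] and [inl false] index the eigenvalues 1 and -1; [inr (j, b)] indexes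
   e^{i alpha_j} if [b] and e^{-i alpha_j} otherwise. *)
Definition spectral_component (o : bool + 'I_J * bool) : 'cV[R[i]]_n :=
  match o with
  | inl true => delta0%:C *: w0
  | inl false => deltam%:C *: wm
  | inr (j, true) => (delta j)%:C *: wp j
  | inr (j, false) => (delta j)%:C *: conjv (wp j)
  end.

Definition spectral_phase (o : bool + 'I_J * bool) : R :=
  match o with
  | inl true => 0
  | inl false => pi
  | inr (j, true) => alpha j
  | inr (j, false) => - alpha j
  end.

Lemma sum_spectral_component :
  \sum_o spectral_component o =
  delta0%:C *: w0 + \sum_(j < J) (delta j)%:C *: (wp j + conjv (wp j)) + deltam%:C *: wm.
Proof.
rewrite big_sumType /= big_bool /=.
rewrite (eq_bigr (fun p => spectral_component (inr (p.1, p.2)))) => [|[] //].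
rewrite -(pair_bigA _ (fun j b => spectral_component (inr (j, b)))) /=.
under eq_bigr => j _ do rewrite big_bool /= -scalerDr.
by rewrite addrAC.
Qed.

Lemma spectral_component_eigen o :
  U *m spectral_component o = expi (spectral_phase o) *: spectral_component o.
Proof.
case: o => [[]|[j []]] /=; rewrite -scalemxAr.
- by case: w0_eigen => [->|[-> _]]; rewrite ?scale0r ?mulmx0 ?scaler0 // expi0 scale1r.
- case: wm_eigen => [->|[-> _]]; rewrite ?scale0r ?mulmx0 ?scaler0 //.
  by rewrite expipi scaleN1r scalerN.
- by rewrite (wp_eigen j).1 !scalerA mulrC.
- rewrite -{1}(real_mx_conjv U_real) -conjv_mul (wp_eigen j).1 conjvZ conj_expi.
  by rewrite !scalerA mulrC.
Qed.

Lemma spectral_phase_range o : - pi < spectral_phase o <= pi.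
Proof.
have pi_gt0 : 0 < pi :> R := pi_gt0 R.
case: o => [[]|[j []]] /=; try (apply/andP; split; lra).
all: by case/andP: (alpha_range j) => ? ?; apply/andP; split; lra.
Qed.

Lemma spectral_phase_inj : injective spectral_phase.
Proof.
have pi_gt0 : 0 < pi :> R := pi_gt0 R.
move=> [[]|[j []]] [[]|[j' []]] //=.
all: try (case/andP: (alpha_range j) => ? ?); try (case/andP: (alpha_range j') => ? ?).
all: try (move=> E; exfalso; move: E; lra).
- by move/alpha_inj ->.
- by move/eqP; rewrite eqr_opp => /eqP /alpha_inj ->.
Qed.

Lemma spectral_phase_eq0 o : (spectral_phase o == 0) = (o == inl true).
Proof.
case: o => [[]|[j []]] /=; rewrite ?eqxx ?oppr_eq0 //.
- by rewrite gt_eqF ?pi_gt0.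
- by case/andP: (alpha_range j) => /gt_eqF ->.
- by case/andP: (alpha_range j) => /gt_eqF ->.
Qed.

Lemma sqnorm_spectral_component o :
  sqnorm (spectral_component o) =
  match o with inl true => delta0 | inl false => deltam | inr (j, _) => delta j end ^+ 2.
Proof.
case: o => [[]|[j []]] /=; rewrite sqnormZ ?sqnorm_conjv ?(wp_eigen j).2 ?mulr1 //.
- by case: w0_eigen => [->|[_ ->]]; rewrite ?expr0n ?mul0r ?mulr1.
- by case: wm_eigen => [->|[_ ->]]; rewrite ?expr0n ?mul0r ?mulr1.
Qed.

(* The components with phase in (0, Delta) in absolute value are exactly the outcomes
   where QH = 1 / |phase| exceeds 1 / Delta. *)
Lemma sum_sqnorm_spectral_small (Delta : R) : 0 < Delta ->
  \sum_(o | 0 < `|spectral_phase o| < Delta) sqnorm (spectral_component o) =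
  QH_tail alpha delta deltam Delta.
Proof.
move=> Delta_gt0.
have inv_lt x : 0 < x -> (1 / Delta < 1 / x) = (x < Delta).
  by move=> x_gt0; rewrite !div1r ltf_pV2 ?posrE.
under eq_bigr => o _ do rewrite sqnorm_spectral_component.
rewrite big_mkcond big_sumType /= big_bool /= normr0 ltxx /= add0r.
rewrite gtr0_norm ?pi_gt0 // /QH_tail addrC inv_lt ?pi_gt0 //; congr (_ + _).
rewrite (eq_bigr (fun p => if 0 < `|spectral_phase (inr (p.1, p.2))| < Delta
  then delta p.1 ^+ 2 else 0)) => [|[] //].
rewrite -(pair_bigA _ (fun j b => if 0 < `|spectral_phase (inr (j, b))| < Delta
  then delta j ^+ 2 else 0)) /= [RHS]big_mkcond; apply: eq_bigr => j _.
case/andP: (alpha_range j) => alpha_gt0 _.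
rewrite big_bool /= normrN gtr0_norm // alpha_gt0 inv_lt //.
by case: (alpha j < Delta); rewrite ?addr0 // mulr2n mulrDl mul1r.
Qed.

End SpectralDecomposition.

Theorem lemma1 (R : realType) (CE c0 : R) :
  exists C1 C2 : R, forall
    (n : nat) (U : 'M[R[i]]_n) (psi : 'cV[R[i]]_n)
    (J : nat) (alpha delta : 'I_J -> R) (wp : 'I_J -> 'cV[R[i]]_n)
    (delta0 deltam : R) (w0 wm : 'cV[R[i]]_n)
    (Delta : R) (K : nat) (A : 'I_K -> 'M[R[i]]_n) (est : 'I_K -> R)
    (costE : nat)
    (eps : R) (k : nat),
    real_mx U -> adjoint U *m U = 1%:M ->
    real_mx psi -> sqnorm psi <= 1 ->
    (forall j, 0 < alpha j < pi) -> injective alpha ->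
    (forall j, U *m wp j = expi (alpha j) *: wp j /\ sqnorm (wp j) = 1) ->
    (delta0 = 0 \/ (U *m w0 = w0 /\ sqnorm w0 = 1)) ->
    (deltam = 0 \/ (U *m wm = - wm /\ sqnorm wm = 1)) ->
    psi = (delta0%:C *: w0
           + \sum_(j < J) (delta j)%:C *: (wp j + conjv (wp j))
           + deltam%:C *: wm) ->
    0 < Delta ->
    (forall x, - pi < est x <= pi) ->
    \sum_(x < K) adjoint (A x) *m A x = 1%:M ->
    (forall x, A x *m U = U *m A x) ->
    (forall (v : 'cV[R[i]]_n) (a : R), - pi < a <= pi ->
        U *m v = expi a *: v -> sqnorm v = 1 ->
        \sum_(x < K | cdist (est x) a >= Delta) sqnorm (A x *m v) <= 1 / 3) ->
    (forall (v : 'cV[R[i]]_n), U *m v = v ->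
        \sum_(x < K | est x != 0) sqnorm (A x *m v) = 0) ->
    costE%:R <= CE / Delta ->
    0 < eps ->
    ln (1 / eps) / ln 3 <= k%:R -> k%:R <= c0 * ln (1 / eps) ->
    QH_tail alpha delta deltam Delta <= eps ->
    `| detect_accept_prob k A est psi - (sqnorm psi - delta0 ^+ 2) | <= C1 * eps
    /\ (`| delta0 | = Num.sqrt (sqnorm psi) -> detect_accept_prob k A est psi = 0)
    /\ (k * costE)%:R <= C2 * ln (1 / eps) / Delta.
Proof.
exists 2, (c0 * CE).
move=> n U psi J alpha delta wp delta0 deltam w0 wm Delta K A est costE eps k.
move=> U_real U_unitary _ psi_le1 alpha_range alpha_inj wp_eigen w0_eigen wm_eigen
  psiE Delta_gt0 _ A_complete A_commute est_precise est_fixed costE_le eps_gt0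
  k_ge k_le QH_le.
have {}psiE : psi = \sum_o spectral_component delta wp delta0 deltam w0 wm o.
  by rewrite psiE sum_spectral_component.
have comp_eigen := spectral_component_eigen delta U_real wp_eigen w0_eigen wm_eigen.
have phase_range := spectral_phase_range alpha_range.
have phase_inj := spectral_phase_inj alpha_range alpha_inj.
have acc_le := detect_accept_prob_eigen_le U_unitary A_complete A_commute est_fixed
  phase_range phase_inj comp_eigen k.
have acc_ge := detect_accept_prob_eigen_ge U_unitary A_complete A_commute est_fixed
  est_precise phase_range phase_inj comp_eigen k.
have phase0 : \sum_(o | spectral_phase alpha o == 0)
    sqnorm (spectral_component delta wp delta0 deltam w0 wm o) = delta0 ^+ 2.
  rewrite (eq_bigl _ _ (spectral_phase_eq0 alpha_range)) big_pred1_eq.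
  exact: (sqnorm_spectral_component delta wp_eigen w0_eigen wm_eigen (inl true)).
rewrite -psiE phase0 in acc_le acc_ge.
rewrite (sum_sqnorm_spectral_small delta alpha_range wp_eigen w0_eigen wm_eigen Delta_gt0)
  in acc_ge.
have acc_ge0 : 0 <= detect_accept_prob k A est psi.
  by apply: sumr_ge0 => s _; apply: sqnorm_ge0.
have inv3_le : (1 / 3) ^+ k * sqnorm psi <= eps.
  apply: le_trans (inv3_expr_le eps_gt0 k_ge); rewrite -[X in _ <= X]mulr1.
  by rewrite ler_wpM2l ?exprn_ge0 ?divr_ge0.
split; [|split].
- rewrite ler_norml; apply/andP; split; lra.
- move=> delta0_norm; have : delta0 ^+ 2 = sqnorm psi.
    by rewrite -(real_normK (num_real delta0)) delta0_norm sqr_sqrtr ?sqnorm_ge0.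
  lra.
- have -> : c0 * CE * ln (1 / eps) / Delta = c0 * ln (1 / eps) * (CE / Delta) by ring.
  by rewrite natrM; apply: ler_pM.
Qed.
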